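(* Let $m\ge 2$ and let $C_1,\dots,C_m\subset\mathbb{R}^n$ be nonempty, closed, convex sets that are pairwise disjoint ($C_i\cap C_j=\varnothing$ for $i\neq j$). Let $C=C_1\times\cdots\times C_m$ and $D(a)=\sum_{i=1}^m\|a_i-a_{i+1}\|$ with $a_{m+1}=a_1$. Then $a^*=(a_1^*,\dots,a_m^* )\in C$ is an optimal solution of $\min_{a\in C}D(a)$ if and only if there exist vectors $n_i\in N_{C_i}(a_i^* )$, $i=1,\dots,m$, such that for each $i=1,\dots,m$ $$\frac{a_i^*-a_{i-1}^*}{\|a_i^*-a_{i-1}^*\|}+\frac{a_i^*-a_{i+1}^*}{\|a_i^*-a_{i+1}^*\|}+n_i=0,$$ with indices cyclic ($a_0^*=a_m^*$, $a_{m+1}^*=a_1^*$). Moreover, in this case $n_1+n_2+\cdots+n_m=0$.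
   Context: For a convex set $K\subset\mathbb{R}^n$ and $x\in K$, the normal cone is $N_K(x)=\{v\in\mathbb{R}^n:\langle v,y-x\rangle\le 0\ \forall y\in K\}$. *)

From HB Require Import structures.
From mathcomp Require Import all_boot all_order all_algebra.
From mathcomp Require Import all_classical all_reals all_analysis.
Set Implicit Arguments. Unset Strict Implicit. Unset Printing Implicit Defensive.
Import Order.TTheory GRing.Theory Num.Theory.
Import numFieldNormedType.Exports.
Local Open Scope ring_scope.
Local Open Scope classical_set_scope.

Definition dotv (R : realType) (n : nat) (u v : 'rV[R]_n) : R :=
  \sum_(k < n) u 0 k * v 0 k.

Definition enorm (R : realType) (n : nat) (u : 'rV[R]_n) : R :=
  Num.sqrt (dotv u u).

Definition convex_set_of (R : realType) (n : nat) (K : set 'rV[R]_n) : Prop :=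
  forall x y, K x -> K y -> forall t : R, 0 <= t <= 1 ->
    K (t *: x + (1 - t) *: y).

Definition normal_cone (R : realType) (n : nat) (K : set 'rV[R]_n) (x : 'rV[R]_n)
  : set 'rV[R]_n := [set v | forall y, K y -> dotv v (y - x) <= 0].

Definition perim (R : realType) (n m : nat) (a : 'I_m -> 'rV[R]_n) : R :=
  \sum_(i < m) enorm (a i - a (ordS i)).

Definition is_optimal (R : realType) (n m : nat) (Cs : 'I_m -> set 'rV[R]_n)
  (a : 'I_m -> 'rV[R]_n) : Prop :=
  (forall i, Cs i (a i)) /\
  forall b : 'I_m -> 'rV[R]_n, (forall i, Cs i (b i)) -> perim a <= perim b.

Definition opt_cond (R : realType) (n m : nat) (Cs : 'I_m -> set 'rV[R]_n)
  (a nv : 'I_m -> 'rV[R]_n) : Prop :=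
  (forall i, normal_cone (Cs i) (a i) (nv i)) /\
  forall i, (enorm (a i - a (ord_pred i)))^-1 *: (a i - a (ord_pred i))
          + (enorm (a i - a (ordS i)))^-1 *: (a i - a (ordS i)) + nv i = 0.

From HB Require Import structures.
From mathcomp Require Import all_boot all_order all_algebra.
From mathcomp Require Import all_classical all_reals all_analysis.
From mathcomp Require Import zify ring lra.
Set Implicit Arguments. Unset Strict Implicit.
Import Order.TTheory GRing.Theory Num.Theory.
Import numFieldNormedType.Exports.
Local Open Scope ring_scope.
Local Open Scope classical_set_scope.

(* Disjointness makes every edge [a_i - a_(i+1)] nonzero, so the perimeter
   D(a + d) = sum ||x_i + (d_i - d_(i+1))|| with x_i := a_i - a_(i+1) is
   squeezed between its linearisation D(a) + sum <g_i, d_i> and the same plus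
   a term quadratic in d, where g_i := u_i - u_(i-1) for the unit edges
   u_i := x_i / ||x_i||.  The lower bound shows that -g_i in N_(C_i)(a_i) for
   all i is sufficient for optimality; the upper bound, applied to d = t (y - a_i)
   placed at coordinate i with t -> 0+, shows it is necessary.  The optimality
   system forces n_i = -g_i, and the g_i telescope to 0. *)

Section InnerProduct.
Variables (R : realType) (n : nat).
Implicit Types (u v w x : 'rV[R]_n).

Lemma dotvC u v : dotv u v = dotv v u.
Proof. by apply: eq_bigr => k _; rewrite mulrC. Qed.

Lemma dotvDl u v w : dotv (u + v) w = dotv u w + dotv v w.
Proof. by rewrite /dotv -big_split; apply: eq_bigr => k _; rewrite mxE mulrDl. Qed.

Lemma dotvZl (c : R) u w : dotv (c *: u) w = c * dotv u w.
Proof. by rewrite /dotv mulr_sumr; apply: eq_bigr => k _; rewrite mxE mulrA. Qed.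

Lemma dotvNl u w : dotv (- u) w = - dotv u w.
Proof. by rewrite -scaleN1r dotvZl mulN1r. Qed.

Lemma dotvBl u v w : dotv (u - v) w = dotv u w - dotv v w.
Proof. by rewrite dotvDl dotvNl. Qed.

Lemma dotvDr u v w : dotv w (u + v) = dotv w u + dotv w v.
Proof. by rewrite dotvC dotvDl !(dotvC w). Qed.

Lemma dotvZr (c : R) u w : dotv w (c *: u) = c * dotv w u.
Proof. by rewrite dotvC dotvZl dotvC. Qed.

Lemma dotvNr u w : dotv w (- u) = - dotv w u.
Proof. by rewrite dotvC dotvNl dotvC. Qed.

Lemma dotvBr u v w : dotv w (u - v) = dotv w u - dotv w v.
Proof. by rewrite dotvDr dotvNr. Qed.

Lemma dotv0l w : dotv 0 w = 0.
Proof. by rewrite -(scale0r 0) dotvZl mul0r. Qed.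

Lemma dotvv_ge0 u : 0 <= dotv u u.
Proof. by apply: sumr_ge0 => k _; rewrite -expr2 sqr_ge0. Qed.

Lemma dotvv_eq0 u : (dotv u u == 0) = (u == 0).
Proof.
apply/idP/eqP => [|->]; last by rewrite dotv0l.
rewrite psumr_eq0 => [/allP u0|k _]; last by rewrite -expr2 sqr_ge0.
apply/matrixP => i k; rewrite ord1 mxE.
by have := u0 k (mem_index_enum k); rewrite /= mulf_eq0 orbb => /eqP.
Qed.

Lemma enorm_ge0 u : 0 <= enorm u.
Proof. exact: sqrtr_ge0. Qed.

Lemma enorm_sqr u : enorm u ^+ 2 = dotv u u.
Proof. by rewrite sqr_sqrtr // dotvv_ge0. Qed.

Lemma enormN u : enorm (- u) = enorm u.
Proof. by rewrite /enorm dotvNl dotvNr opprK. Qed.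

Lemma enorm_eq0 u : (enorm u == 0) = (u == 0).
Proof. by rewrite /enorm sqrtr_eq0 le_eqVlt ltNge dotvv_ge0 orbF dotvv_eq0. Qed.

Lemma enorm_gt0 u : (0 < enorm u) = (u != 0).
Proof. by rewrite lt_neqAle enorm_ge0 andbT eq_sym enorm_eq0. Qed.

Lemma dotv_le_enorm u v : dotv u v <= enorm u * enorm v.
Proof.
have [->|u0] := eqVneq u 0; first by rewrite dotv0l mulr_ge0 ?enorm_ge0.
have [->|v0] := eqVneq v 0; first by rewrite dotvC dotv0l mulr_ge0 ?enorm_ge0.
set A := enorm u; set B := enorm v.
have A0 : 0 < A by rewrite enorm_gt0.
have B0 : 0 < B by rewrite enorm_gt0.
have := dotvv_ge0 (B *: u - A *: v).
rewrite !dotvBl !dotvBr !dotvZl !dotvZr (dotvC v u) -!enorm_sqr -/A -/B => uv.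
rewrite -(ler_pM2l (mulr_gt0 A0 B0)); nra.
Qed.

Lemma enorm_add_ge x w : x != 0 ->
  enorm x + dotv ((enorm x)^-1 *: x) w <= enorm (x + w).
Proof.
rewrite -enorm_gt0 => x0; rewrite dotvZl.
have := dotv_le_enorm x (x + w); rewrite dotvDr -enorm_sqr => cs.
have -> : enorm x + (enorm x)^-1 * dotv x w = (enorm x ^+ 2 + dotv x w) / enorm x.
  by field; rewrite gt_eqF.
by rewrite ler_pdivrMr // mulrC.
Qed.

(* From [2 p q <= p^2 + q^2] with [p = enorm x], [q = enorm (x + w)]. *)
Lemma enorm_add_le x w : x != 0 ->
  enorm (x + w) <= enorm x + dotv ((enorm x)^-1 *: x) w + dotv w w / (2 * enorm x).
Proof.
rewrite -enorm_gt0 => x0; rewrite dotvZl.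
have E : enorm (x + w) ^+ 2 = enorm x ^+ 2 + 2 * dotv x w + dotv w w.
  by rewrite !enorm_sqr !dotvDl !dotvDr (dotvC w x); ring.
have -> : enorm x + (enorm x)^-1 * dotv x w + dotv w w / (2 * enorm x)
    = (enorm x ^+ 2 + enorm (x + w) ^+ 2) / (2 * enorm x).
  by rewrite E; field; rewrite gt_eqF.
rewrite ler_pdivlMr ?mulr_gt0 //.
have := sqr_ge0 (enorm x - enorm (x + w)); rewrite sqrrB; lra.
Qed.

End InnerProduct.

Lemma ge0_limit_scaled (R : realType) (c Q : R) :
  (forall t, 0 < t <= 1 -> 0 <= c + t * Q) -> 0 <= c.
Proof.
move=> cQ; rewrite leNgt; apply/negP => c0.
have normQ := normr_ge0 Q.
set t := - c / (`|Q| - c).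
have t0 : 0 < t by apply: divr_gt0; lra.
have t1 : t <= 1 by rewrite ler_pdivrMr; lra.
have c2 : 0 < c ^+ 2 by rewrite exprn_even_gt0 //= lt_eqF.
have pos : 0 < c ^+ 2 / (`|Q| - c) by rewrite divr_gt0 //; lra.
have : c + t * Q <= - (c ^+ 2 / (`|Q| - c)).
  have -> : - (c ^+ 2 / (`|Q| - c)) = c + t * `|Q| by rewrite /t; field; lra.
  by rewrite lerD2l ler_pM2l // ler_norm.
have := cQ t; rewrite t0 t1 /=; lra.
Qed.

Lemma ordS_neq m (i : 'I_m) : (1 < m)%N -> i != ordS i.
Proof.
case: i => i /= im m1; apply/eqP => /(congr1 val) /=.
have [iSm|mSi] := ltnP i.+1 m; first by rewrite modn_small //; lia.
have -> : i.+1 = m by lia.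
by rewrite modnn; lia.
Qed.

Section Perimeter.
Variables (R : realType) (n m : nat) (a : 'I_m -> 'rV[R]_n).

Definition edge i := a i - a (ordS i).
Definition unit_edge i := (enorm (edge i))^-1 *: edge i.
Definition perim_grad i := unit_edge i - unit_edge (ord_pred i).

Lemma unit_edge_pred i :
  (enorm (a i - a (ord_pred i)))^-1 *: (a i - a (ord_pred i))
    = - unit_edge (ord_pred i).
Proof.
by rewrite /unit_edge /edge ord_predK -scalerN opprB -[a i - _]opprB enormN.
Qed.

Lemma sum_ord_pred (V : zmodType) (F : 'I_m -> V) :
  \sum_i F (ord_pred i) = \sum_i F i.
Proof. by rewrite [in RHS](reindex_inj (@ord_pred_inj m)). Qed.

Lemma sum_perim_grad : \sum_i perim_grad i = 0.
Proof. by rewrite sumrB sum_ord_pred subrr. Qed.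

Lemma sum_dotv_unit_edge (d : 'I_m -> 'rV[R]_n) :
  \sum_i dotv (unit_edge i) (d i - d (ordS i)) = \sum_i dotv (perim_grad i) (d i).
Proof.
under eq_bigr do rewrite dotvBr.
under [in RHS]eq_bigr do rewrite dotvBl.
rewrite !sumrB -(sum_ord_pred (fun i => dotv (unit_edge i) (d (ordS i)))).
by congr (_ - _); apply: eq_bigr => i _; rewrite ord_predK.
Qed.

Lemma perim_translate (d : 'I_m -> 'rV[R]_n) :
  perim (fun i => a i + d i) = \sum_i enorm (edge i + (d i - d (ordS i))).
Proof. by apply: eq_bigr => i _; rewrite /edge opprD addrACA. Qed.

Hypothesis edge_neq0 : forall i, edge i != 0.

Lemma perim_translate_ge (d : 'I_m -> 'rV[R]_n) :
  perim a + \sum_i dotv (perim_grad i) (d i) <= perim (fun i => a i + d i).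
Proof.
rewrite perim_translate -sum_dotv_unit_edge /perim -big_split /=.
by apply: ler_sum => i _; exact: enorm_add_ge (edge_neq0 i).
Qed.

Lemma perim_translate_le (d : 'I_m -> 'rV[R]_n) :
  perim (fun i => a i + d i) <= perim a + \sum_i dotv (perim_grad i) (d i)
    + \sum_i dotv (d i - d (ordS i)) (d i - d (ordS i)) / (2 * enorm (edge i)).
Proof.
rewrite perim_translate -sum_dotv_unit_edge /perim -!big_split /=.
by apply: ler_sum => i _; exact: enorm_add_le (edge_neq0 i).
Qed.

Lemma perim_grad_dotv_ge0 (d : 'I_m -> 'rV[R]_n) :
  (forall t, 0 < t <= 1 -> perim a <= perim (fun i => a i + t *: d i)) ->
  0 <= \sum_i dotv (perim_grad i) (d i).
Proof.
move=> le_perim.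
set L := \sum_i _.
pose Q := \sum_i dotv (d i - d (ordS i)) (d i - d (ordS i)) / (2 * enorm (edge i)).
apply: (@ge0_limit_scaled _ _ Q) => t /andP[t0 t1].
have := le_trans (le_perim t (andb_true_intro (conj t0 t1)))
  (perim_translate_le (fun i => t *: d i)).
rewrite (_ : \sum_i _ = t * L); last first.
  by rewrite /L mulr_sumr; apply: eq_bigr => i _; rewrite dotvZr.
rewrite (_ : \sum_i _ = t ^+ 2 * Q); last first.
  rewrite /Q mulr_sumr; apply: eq_bigr => i _.
  by rewrite -scalerBr dotvZl dotvZr mulrA -expr2 mulrA.
move=> ineq; rewrite -(pmulr_rge0 _ t0) mulrDr mulrA -expr2; lra.
Qed.

Section Constraints.
Variable Cs : 'I_m -> set 'rV[R]_n.
Hypothesis aC : forall i, Cs i (a i).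

Lemma opt_cond_normalE nv : opt_cond Cs a nv -> forall i, nv i = - perim_grad i.
Proof.
move=> [_ eq_opt] i; apply/eqP; rewrite -addr_eq0 addrC -(eq_opt i).
by rewrite unit_edge_pred (addrC (- _)).
Qed.

Lemma opt_cond_perim_grad :
  (forall i, normal_cone (Cs i) (a i) (- perim_grad i)) ->
  opt_cond Cs a (fun i => - perim_grad i).
Proof.
split=> // i.
by rewrite unit_edge_pred -/(unit_edge i) (addrC (- _)) subrr.
Qed.

Lemma optimal_of_perim_grad_normal :
  (forall i, normal_cone (Cs i) (a i) (- perim_grad i)) -> is_optimal Cs a.
Proof.
move=> normal; split=> // b bC.
have := perim_translate_ge (fun i => b i - a i).
rewrite (_ : (fun i => _) = b); last by apply/funext => i; rewrite addrC subrK.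
apply: le_trans; rewrite lerDl; apply: sumr_ge0 => i _.
by rewrite -oppr_le0 -dotvNl; apply: normal.
Qed.

Hypothesis Cs_convex : forall i, convex_set_of (Cs i).

Lemma perim_grad_normal_of_optimal i :
  is_optimal Cs a -> normal_cone (Cs i) (a i) (- perim_grad i).
Proof.
move=> [_ opt] y yC; rewrite dotvNl oppr_le0.
pose d j := if j == i then y - a i else 0.
have := perim_grad_dotv_ge0 (d := d).
rewrite (bigD1 i) //= big1 => [|j /negbTE ji]; last by rewrite /d ji dotvC dotv0l.
rewrite addr0 /d eqxx; apply=> t t01; apply: opt => j.
rewrite /d; case: eqP => [->|_]; last by rewrite scaler0 addr0.
have -> : a i + t *: (y - a i) = t *: y + (1 - t) *: a i.
  by rewrite scalerBr scalerBl scale1r addrCA addrA.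
by apply: Cs_convex => //; case/andP: t01 => /ltW -> ->.
Qed.

End Constraints.
End Perimeter.

Theorem mainTheorem5 (R : realType) (n m : nat) (Cs : 'I_m -> set 'rV[R]_n)
  (a : 'I_m -> 'rV[R]_n) :
  (2 <= m)%N ->
  (forall i, Cs i !=set0) ->
  (forall i, closed (Cs i)) ->
  (forall i, convex_set_of (Cs i)) ->
  (forall i j, i != j -> Cs i `&` Cs j = set0) ->
  (forall i, Cs i (a i)) ->
  (is_optimal Cs a <-> exists nv, opt_cond Cs a nv) /\
  (forall nv, opt_cond Cs a nv -> \sum_(i < m) nv i = 0).
Proof.
move=> m2 _ _ cvx disj aC.
have edge_neq0 i : edge a i != 0.
  rewrite subr_eq0; apply/eqP => ai.
  have : (Cs i `&` Cs (ordS i)) (a i) by split; rewrite // ai.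
  by rewrite disj // ordS_neq.
split; last first.
  move=> nv opt; under eq_bigr do rewrite (opt_cond_normalE opt).
  by rewrite sumrN sum_perim_grad oppr0.
split=> [opt|[nv opt]].
- exists (fun i => - perim_grad a i); apply: opt_cond_perim_grad => // i.
  exact: perim_grad_normal_of_optimal.
- apply: optimal_of_perim_grad_normal => // i.
  by rewrite -(opt_cond_normalE opt); case: opt.
Qed.
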